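(* Let $\mathcal{T}$ be an $l$-eligible microdata table and run the algorithm described in the context (arbitrary tie-breaking). If the algorithm terminates during Phase Two, then the final residue set $\ddot{R}$ together with the remaining groups is a feasible solution of the reformulated tuple minimization problem and $|\ddot{R}| \le OPT + l - 1$.
   Context: A microdata table $\mathcal{T}$ is a multiset of $n$ tuples with values on $d$ quasi-identifier (QI) attributes and one sensitive attribute (SA). For a multiset $Q$ and SA value $v$, $h(Q,v)$ is the number of tuples in $Q$ with SA value $v$, $h(Q)=\max_v h(Q,v)$, pillars of $Q$ are the $v$ with $h(Q,v)=h(Q)$; $Q$ is $l$-eligible if $|Q|\ge l\cdot h(Q)$. Let $Q_1,\dots,Q_s$ be the maximal classes of tuples of $\mathcal{T}$ with identical values on all QI attributes. Reformulated tuple minimization: choose sub-multisets $Q'_i\subseteq Q_i$ and $R'=\mathcal{T}\setminus\bigcup_i Q'_i$ with all $Q'_i$ and $R'$ $l$-eligible, minimizing $|R'|$; $OPT$ is the minimum. The algorithm only moves tuples from the groups into a set $R$ (initially empty). Phase One: for each $i$, while $Q_i$ is not $l$-eligible, move a tuple of a pillar of $Q_i$ to $R$; if then $R$ is $l$-eligible, terminate. Phase Two terminology (w.r.t. current state): a group $Q$ is thin if $|Q|=l\cdot h(Q)$ and fat if $|Q|\ge l\cdot h(Q)+1$; $Q$ is conflicting if some pillar of $Q$ is a pillar of $R$; $Q$ is dead if thin and conflicting, alive otherwise; an SA value $v$ is alive if some alive group $Q$ has $h(Q,v)>0$. Phase Two iterates: if no SA value is alive, Phase Two ends (go to Phase Three).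 Otherwise pick an alive SA value $v$ minimizing $h(R,v)$ and an alive group $Q$ with $h(Q,v)>0$ (ties arbitrary); if $Q$ is fat move one tuple with SA value $v$ from $Q$ to $R$; if $Q$ is thin move one tuple of each pillar of $Q$ to $R$. If $R$ is now $l$-eligible, the algorithm terminates. *)

From mathcomp Require Import all_boot.
Set Implicit Arguments. Unset Strict Implicit. Unset Printing Implicit Defensive.

(* A microdata table is modelled by multiplicities: t q v = number of tuples
   with QI-vector q and SA value v.  The QI class of q is the multiset t q
   (over SA values).  A "state" s : Q -> V -> nat records the SA multiset
   currently left in each QI group; the residue R is the rest of the table. *)

Definition msize (V : finType) (c : V -> nat) : nat := \sum_(v : V) c v.
Definition hmax (V : finType) (c : V -> nat) : nat := \max_(v : V) c v.
Definition eligible (l : nat) (V : finType) (c : V -> nat) : bool :=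
  l * hmax c <= msize c.
Definition pillar (V : finType) (c : V -> nat) (v : V) : bool := c v == hmax c.

Definition table_hist (Q V : finType) (t : Q -> V -> nat) : V -> nat :=
  fun v => \sum_(q : Q) t q v.
Definition resid (Q V : finType) (t s : Q -> V -> nat) : V -> nat :=
  fun v => \sum_(q : Q) (t q v - s q v).

Definition feasible (l : nat) (Q V : finType) (t c : Q -> V -> nat) : Prop :=
  (forall q v, c q v <= t q v) /\ (forall q, eligible l (c q)) /\
  eligible l (resid t c).

Inductive star (A : Type) (r : A -> A -> Prop) : A -> A -> Prop :=
| star_refl x : star r x x
| star_step x y z : r x y -> star r y z -> star r x z.

Definition p1_step (l : nat) (Q V : finType) (s s' : Q -> V -> nat) : Prop :=
  exists q v, ~~ eligible l (s q) /\ pillar (s q) v /\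
    forall q' u, s' q' u = if (q' == q) && (u == v) then (s q v).-1 else s q' u.

Definition thin (l : nat) (V : finType) (c : V -> nat) : bool := msize c == l * hmax c.
Definition fat (l : nat) (V : finType) (c : V -> nat) : bool := l * hmax c + 1 <= msize c.
Definition conflicting (Q V : finType) (t s : Q -> V -> nat) (q : Q) : bool :=
  [exists v, pillar (s q) v && pillar (resid t s) v].
Definition dead (l : nat) (Q V : finType) (t s : Q -> V -> nat) (q : Q) : bool :=
  thin l (s q) && conflicting t s q.
Definition alive_group (l : nat) (Q V : finType) (t s : Q -> V -> nat) (q : Q) : bool :=
  ~~ dead l t s q.
Definition alive_val (l : nat) (Q V : finType) (t s : Q -> V -> nat) (v : V) : bool :=
  [exists q, alive_group l t s q && (0 < s q v)].

Definition p2_step (l : nat) (Q V : finType) (t s s' : Q -> V -> nat) : Prop :=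
  exists v q,
    alive_val l t s v /\
    (forall u, alive_val l t s u -> resid t s v <= resid t s u) /\
    alive_group l t s q /\ 0 < s q v /\
    ((fat l (s q) /\
      forall q' u, s' q' u = if (q' == q) && (u == v) then (s q v).-1 else s q' u)
     \/
     (thin l (s q) /\
      forall q' u, s' q' u = if q' == q then s q u - pillar (s q) u else s q' u)).

(* p2_term l t s sf : starting Phase Two (from a state s where R is not
   l-eligible), a sequence of >= 1 Phase Two iterations ends in sf, R becomes
   l-eligible exactly at sf, so the algorithm terminates there. *)
Inductive p2_term (l : nat) (Q V : finType) (t : Q -> V -> nat) :
  (Q -> V -> nat) -> (Q -> V -> nat) -> Prop :=
| p2_last s s' : p2_step l t s s' -> eligible l (resid t s') -> p2_term l t s s'
| p2_more s s' s'' : p2_step l t s s' -> ~~ eligible l (resid t s') ->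
    p2_term l t s' s'' -> p2_term l t s s''.

From mathcomp Require Import all_boot.
From mathcomp Require Import zify.
Set Implicit Arguments. Unset Strict Implicit. Unset Printing Implicit Defensive.

(* Phase One only deletes tuples that no l-eligible sub-multiset of the original
   class can keep, so after it every group still contains every eligible
   sub-multiset of its class.  Hence any feasible residue R' dominates the
   residue R1 left by Phase One pointwise, and OPT >= l h(R') >= l h(R1).
   Every Phase Two move keeps all groups eligible, removes at most l tuples and
   never raises h(R): a fat group loses a value v with h(R,v) < h(R) (otherwise
   its more than l distinct values would all be pillars of R, making R
   eligible), and a thin alive group only loses values that are not pillars
   of R.  Just before the last move R is not eligible, so
   |R| < l h(R) <= l h(R1), and the last move adds at most l tuples. *)

Section Multisets.

Variables (V : finType) (l : nat).
Implicit Types (c d : V -> nat) (u v : V).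

Lemma leq_hmax c v : c v <= hmax c.
Proof. exact: leq_bigmax. Qed.

Lemma hmax_leq c m : (forall v, c v <= m) -> hmax c <= m.
Proof. by move=> c_le; apply/bigmax_leqP => v _. Qed.

Lemma hmax_homo c d : (forall v, c v <= d v) -> hmax c <= hmax d.
Proof. by move=> cd; apply: hmax_leq => v; apply: leq_trans (cd v) (leq_hmax d v). Qed.

Lemma msize_homo c d : (forall v, c v <= d v) -> msize c <= msize d.
Proof. by move=> cd; apply: leq_sum => v _. Qed.

Lemma msize_subn c d :
  (forall u, d u <= c u) -> msize c = msize d + msize (fun u => c u - d u).
Proof. by move=> dc; rewrite /msize -big_split; apply: eq_bigr => u _; rewrite /= subnKC. Qed.

Lemma eq_eligible c d : c =1 d -> eligible l c = eligible l d.
Proof. by move=> cd; rewrite /eligible /hmax /msize !(eq_bigr d (fun u _ => cd u)). Qed.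

Lemma eligible_homo c d :
  (forall v, c v <= d v) -> hmax d <= hmax c -> eligible l c -> eligible l d.
Proof.
move=> cd hdc; rewrite /eligible => elc.
by apply: leq_trans (leq_trans _ elc) (msize_homo cd); rewrite leq_mul2l hdc orbT.
Qed.

Lemma card_pillar c : #|[pred u | pillar c u]| = \sum_u (pillar c u : nat).
Proof. by rewrite -sum1_card big_mkcond. Qed.

Lemma eligible_pillars c : l <= #|[pred u | pillar c u]| -> eligible l c.
Proof.
move=> many; rewrite /eligible; apply: leq_trans (leq_mul many (leqnn _)) _.
rewrite -sum1_card big_distrl /= /msize [X in _ <= X](bigID (pillar c)) /=.
by apply: leq_trans (leq_addr _ _); apply: leq_sum => u /eqP ->; rewrite mul1n.
Qed.

Lemma fat_support c : fat l c -> l < #|[pred u | 0 < c u]|.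
Proof.
rewrite /fat ltnNge; apply: contraTN => small.
have : msize c <= #|[pred u | 0 < c u]| * hmax c.
  rewrite -sum1_card big_distrl /= /msize (bigID (fun u => 0 < c u)) /=.
  rewrite [X in _ + X]big1 => [|u]; last by rewrite lt0n negbK => /eqP.
  by rewrite addn0; apply: leq_sum => u _; rewrite mul1n leq_hmax.
have := leq_mul small (leqnn (hmax c)); lia.
Qed.

Lemma eligible_fat_remove c d :
  fat l c -> (forall v, d v <= c v) -> msize c <= (msize d).+1 -> eligible l d.
Proof.
rewrite /fat /eligible => fatc dc szc.
have := leq_mul (leqnn l) (hmax_homo dc); lia.
Qed.

Lemma thin_pillars c : thin l c -> 0 < hmax c -> #|[pred u | pillar c u]| <= l.
Proof.
move=> /eqP thinc hpos; rewrite -(leq_pmul2r hpos) -thinc card_pillar big_distrl /msize.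
by apply: leq_sum => u _; case: (boolP (pillar c u)) => [/eqP ->|] /=; rewrite ?mul1n ?mul0n.
Qed.

Lemma eligible_thin_strip c : thin l c -> eligible l (fun u => c u - pillar c u).
Proof.
move=> thinc; have [h0|hpos] := posnP (hmax c).
  rewrite /eligible (_ : hmax _ = 0) ?muln0 //; apply/eqP; rewrite -leqn0.
  by apply: hmax_leq => u; rewrite leq_subLR; apply: leq_trans (leq_hmax c u) _; rewrite h0.
have hstrip : hmax (fun u => c u - pillar c u) <= (hmax c).-1.
  apply: hmax_leq => u; case: (boolP (pillar c u)) => [/eqP -> | npil].
    by rewrite subn1.
  by have := leq_hmax c u; move: npil; rewrite /pillar subn0 => /eqP; lia.
have szstrip : msize (fun u => c u - pillar c u) + #|[pred u | pillar c u]| = msize c.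
  rewrite card_pillar /msize -big_split /=; apply: eq_bigr => u _.
  by case: (boolP (pillar c u)) => [/eqP ->|]; rewrite ?subn0 ?addn0 //; lia.
move: (thin_pillars thinc hpos) (leq_mul (leqnn l) hstrip) szstrip (eqP thinc).
rewrite /eligible; nia.
Qed.

End Multisets.

Section Residue.

Variables (Q V : finType) (t s s' : Q -> V -> nat) (q : Q).
Hypotheses (s_le_t : forall q v, s q v <= t q v)
           (shrink_q : forall u, s' q u <= s q u)
           (s'_off_q : forall q', q' != q -> s' q' =1 s q').

Lemma shrink_le_t q' u : s' q' u <= t q' u.
Proof.
apply: leq_trans (s_le_t q' u).
by case: (eqVneq q' q) => [->|/s'_off_q ->].
Qed.

Lemma resid_shrink u : resid t s' u = resid t s u + (s q u - s' q u).
Proof.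
rewrite /resid (bigD1 q) //= [in RHS](bigD1 q) //=.
rewrite (eq_bigr (fun q' => t q' u - s q' u)); last by move=> q' /s'_off_q ->.
by have := s_le_t q u; have := shrink_q u; lia.
Qed.

Lemma msize_resid_shrink :
  msize (resid t s') = msize (resid t s) + msize (fun u => s q u - s' q u).
Proof. by rewrite /msize -big_split; apply: eq_bigr => u _; rewrite resid_shrink. Qed.

End Residue.

Definition covers_eligible_subs (l : nat) (Q V : finType) (t s : Q -> V -> nat) :=
  forall q (c : V -> nat), (forall v, c v <= t q v) -> eligible l c -> forall v, c v <= s q v.

Lemma p1_step_covers (l : nat) (Q V : finType) (t s s' : Q -> V -> nat) :
  p1_step l s s' -> covers_eligible_subs l t s -> covers_eligible_subs l t s'.
Proof.
move=> [q0 [v0 [nelig [pil s'E]]]] cover q c c_le_t eligc v; rewrite s'E.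
case: ifP => [/andP[/eqP eq_q /eqP eq_v] | _]; last exact: cover.
subst q v; have c_le_s := cover q0 c c_le_t eligc.
suff : c v0 != s q0 v0 by have := c_le_s v0; lia.
apply: contra nelig => /eqP cv0; apply: eligible_homo c_le_s _ eligc.
by rewrite -(eqP pil) -cv0 leq_hmax.
Qed.

Lemma p1_step_le (l : nat) (Q V : finType) (s s' : Q -> V -> nat) :
  p1_step l s s' -> forall q v, s' q v <= s q v.
Proof.
move=> [q0 [v0 [_ [_ s'E]]]] q v; rewrite s'E.
by case: ifP => [/andP[/eqP -> /eqP ->]|_]; rewrite ?leq_pred.
Qed.

Lemma star_inv (A : Type) (r : A -> A -> Prop) (P : A -> Prop) x y :
  (forall a b, r a b -> P a -> P b) -> star r x y -> P x -> P y.
Proof. by move=> stepP; elim=> // a b c rab _ IH /(stepP _ _ rab). Qed.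

Lemma resid_le_covering (l : nat) (Q V : finType) (t s c : Q -> V -> nat) :
  covers_eligible_subs l t s -> (forall q v, c q v <= t q v) ->
  (forall q, eligible l (c q)) -> forall v, resid t s v <= resid t c v.
Proof.
move=> cover c_le_t eligc v; apply: leq_sum => q _.
by apply: leq_sub2l; apply: cover.
Qed.

Definition bounded_move (l : nat) (Q V : finType) (t s s' : Q -> V -> nat) (q : Q) :=
  [/\ forall u, s' q u <= s q u, forall q', q' != q -> s' q' =1 s q',
      eligible l (s' q), msize (fun u => s q u - s' q u) <= l &
      forall u, resid t s u + (s q u - s' q u) <= hmax (resid t s)].

Lemma bounded_move_props (l : nat) (Q V : finType) (t s s' : Q -> V -> nat) q :
  bounded_move l t s s' q ->
  (forall q v, s q v <= t q v) -> (forall q, eligible l (s q)) ->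
  [/\ forall q v, s' q v <= t q v, forall q, eligible l (s' q),
      hmax (resid t s') <= hmax (resid t s) &
      msize (resid t s') <= msize (resid t s) + l].
Proof.
move=> [shrink off elig removed resid_le] s_le_t groups_elig; split.
- exact: shrink_le_t.
- move=> q'; case: (eqVneq q' q) => [-> //|/off sq'].
  by rewrite (eq_eligible _ sq').
- by apply: hmax_leq => u; rewrite (resid_shrink s_le_t shrink off).
- by rewrite (msize_resid_shrink s_le_t shrink off) leq_add2l.
Qed.

Section PhaseTwoStep.

Variables (l : nat) (Q V : finType) (t s s' : Q -> V -> nat) (v : V) (q : Q).
Hypotheses (resid_nelig : ~~ eligible l (resid t s))
           (q_alive : alive_group l t s q) (q_v : 0 < s q v).

Local Notation R := (resid t s).

Lemma fat_step_resid :
  (forall u, alive_val l t s u -> R v <= R u) -> fat l (s q) -> R v < hmax R.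
Proof.
move=> v_min fatq; rewrite ltnNge; apply: contra resid_nelig => hRv.
apply: eligible_pillars; apply: leq_trans (ltnW (fat_support fatq)) _.
apply: subset_leq_card; apply/subsetP => u /= q_u.
have alive_u : alive_val l t s u by apply/existsP; exists q; rewrite q_alive.
by rewrite inE /pillar eqn_leq leq_hmax (leq_trans hRv (v_min _ alive_u)).
Qed.

Lemma thin_step_resid u : thin l (s q) -> pillar (s q) u -> R u < hmax R.
Proof.
move=> thinq pil_u; rewrite ltnNge; apply: contra q_alive => hRu.
rewrite /dead thinq; apply/existsP; exists u.
by rewrite pil_u /pillar eqn_leq leq_hmax hRu.
Qed.

Lemma fat_step_bounded :
  (forall u, alive_val l t s u -> R v <= R u) -> fat l (s q) ->
  (forall q' u, s' q' u = if (q' == q) && (u == v) then (s q v).-1 else s q' u) ->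
  bounded_move l t s s' q.
Proof.
move=> v_min fatq s'E.
have shrink u : s' q u <= s q u.
  by rewrite s'E eqxx /=; case: eqP => [->|_]; rewrite ?leq_pred.
have removed : msize (fun u => s q u - s' q u) = 1.
  rewrite /msize (bigD1 v) //= big1 => [|u /negbTE nuv]; last by rewrite s'E eqxx nuv subnn.
  by rewrite s'E !eqxx /=; lia.
have l_pos : 0 < l.
  by move: resid_nelig; rewrite lt0n; apply: contra => /eqP ->; rewrite /eligible mul0n.
split=> //.
- by move=> q' /negbTE nq' u; rewrite s'E nq'.
- by apply: (eligible_fat_remove fatq shrink); rewrite (msize_subn shrink) removed addn1.
- by rewrite removed.
- move=> u; rewrite s'E eqxx /=; case: (eqVneq u v) => [->|_]; last by rewrite subnn addn0 leq_hmax.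
  by move: (fat_step_resid v_min fatq) q_v; lia.
Qed.

Lemma thin_step_bounded :
  thin l (s q) ->
  (forall q' u, s' q' u = if q' == q then s q u - pillar (s q) u else s q' u) ->
  bounded_move l t s s' q.
Proof.
move=> thinq s'E.
have hpos : 0 < hmax (s q) by apply: leq_trans q_v (leq_hmax _ _).
have removedE u : s q u - s' q u = pillar (s q) u.
  rewrite s'E eqxx; case: (boolP (pillar (s q) u)) => [/eqP ->|_]; last by rewrite !subn0 subnn.
  by move: hpos; lia.
split.
- by move=> u; rewrite s'E eqxx leq_subr.
- by move=> q' /negbTE nq' u; rewrite s'E nq'.
- by rewrite (eq_eligible _ (s'E q)) eqxx; apply: eligible_thin_strip.
- by rewrite /msize (eq_bigr _ (fun u _ => removedE u)) -card_pillar thin_pillars.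
- move=> u; rewrite removedE; case: (boolP (pillar (s q) u)) => [pil_u|_].
    by rewrite addn1; apply: thin_step_resid.
  by rewrite addn0 leq_hmax.
Qed.

End PhaseTwoStep.

Lemma p2_step_bounded (l : nat) (Q V : finType) (t s s' : Q -> V -> nat) :
  p2_step l t s s' -> ~~ eligible l (resid t s) -> exists q, bounded_move l t s s' q.
Proof.
move=> [v [q [_ [v_min [q_alive [q_v [[fatq s'E]|[thinq s'E]]]]]]]] resid_nelig; exists q.
- exact: (fat_step_bounded resid_nelig q_alive q_v v_min fatq s'E).
- exact: (thin_step_bounded resid_nelig q_alive q_v thinq s'E).
Qed.

Lemma p2_term_bound (l : nat) (Q V : finType) (t s sf : Q -> V -> nat) (H : nat) :
  p2_term l t s sf ->
  (forall q v, s q v <= t q v) -> (forall q, eligible l (s q)) ->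
  ~~ eligible l (resid t s) -> hmax (resid t s) <= H ->
  [/\ forall q v, sf q v <= t q v, forall q, eligible l (sf q),
      eligible l (resid t sf) & msize (resid t sf) < l * H + l].
Proof.
move=> p2; elim: p2 H => [s0 s1 step elig1 | s0 s1 s2 step nelig1 _ IH] H
  s_le_t groups_elig nelig0 hmaxH;
  have [q move] := p2_step_bounded step nelig0;
  have [s1_le_t groups_elig1 hmax1 msize1] := bounded_move_props move s_le_t groups_elig.
- split=> //; move: nelig0 msize1 (leq_mul (leqnn l) hmaxH); rewrite /eligible; lia.
- exact: IH (leq_trans hmax1 hmaxH).
Qed.

Theorem corollary3 (Q V : finType) (l : nat) (t s1 sf : Q -> V -> nat) :
  eligible l (table_hist t) ->
  star (@p1_step l Q V) t s1 ->
  (forall q, eligible l (s1 q)) ->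
  ~~ eligible l (resid t s1) ->
  p2_term l t s1 sf ->
  feasible l t sf /\
  (forall c, feasible l t c -> msize (resid t sf) <= msize (resid t c) + l - 1).
Proof.
(* Eligibility of the table only guarantees that the algorithm terminates. *)
move=> _ p1 groups_elig1 nelig1 p2.
have [s1_le_t cover1] : (forall q v, s1 q v <= t q v) /\ covers_eligible_subs l t s1.
  apply: (@star_inv _ _ (fun s => (forall q v, s q v <= t q v) /\ covers_eligible_subs l t s)
    _ _ _ p1) => [a b step [a_le_t cover_a] | ]; last by split.
  split; last exact: p1_step_covers step cover_a.
  by move=> q v; apply: leq_trans (p1_step_le step q v) (a_le_t q v).
have [sf_le_t groups_eligf eligf sizef] :=
  p2_term_bound p2 s1_le_t groups_elig1 nelig1 (leqnn _).
split=> [|c [c_le_t [groups_eligc eligc]]]; first by split.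
have := leq_mul (leqnn l) (hmax_homo (resid_le_covering cover1 c_le_t groups_eligc)).
by move: eligc sizef; rewrite /eligible; lia.
Qed.
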